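(* For every positive integer $n$: (a) $\displaystyle nN^p(n)=\sum_{k=1}^{n-1}N^p(k)\sigma(n-k)+\sum_{t=1}^{n}t\,\tau(t)\,p(n-t)$; (b) $\displaystyle nN^q(n)=\sum_{k=1}^{n-1}N^q(k)\sigma^s(n-k)+\sum_{t=1}^{n}t\,\tau^s(t)\,q(n-t)$; (c) $\displaystyle nN^p_{bin}(n)=\sum_{k=1}^{n-1}N^p_{bin}(k)\big(2^{\vartheta_2(n-k)+1}-1\big)+\sum_{t=1}^{n}t\big(\vartheta_2(t)+1\big)b(n-t)$.
   Context: $N^p(n)$ (resp. $N^q(n)$) is the total number of parts, summed over all partitions (resp. partitions into distinct parts) of $n$; $p(m)$, $q(m)$ are the numbers of partitions and of partitions into distinct parts of $m$, with $p(0)=q(0)=1$. $\tau(m)$ is the number of positive divisors of $m$, $\sigma(m)$ their sum, $\tau^s(m)=\sum_{d\mid m}(-1)^{m/d-1}$, $\sigma^s(m)=\sum_{d\mid m}(-1)^{m/d-1}d$. A binary partition is a partition whose parts are powers of $2$ (including $1$); $b(m)$ is the number of binary partitions of $m$ with $b(0)=1$, and $N^p_{bin}(m)$ is the total number of parts over all binary partitions of $m$. $\vartheta_2$ is the $2$-adic valuation. *)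

From mathcomp Require Import all_boot all_order all_algebra.
Set Implicit Arguments. Unset Strict Implicit. Unset Printing Implicit Defensive.
Import GRing.Theory Num.Theory.

(* A partition of n is encoded by its multiplicity function:
   m i = number of parts equal to i.+1  (parts lie in 1..n, each
   multiplicity is at most n).  The sum of parts is \sum_i (i+1) m_i. *)
Definition mult_fun (n : nat) := {ffun 'I_n -> 'I_n.+1}.

Definition part_sum n (m : mult_fun n) : nat := \sum_(i < n) i.+1 * m i.
Definition num_parts n (m : mult_fun n) : nat := \sum_(i < n) m i.

Definition is_partition n (m : mult_fun n) : bool := part_sum m == n.
Definition is_dpartition n (m : mult_fun n) : bool :=
  is_partition m && [forall i, m i <= 1].
Definition is_pow2 (k : nat) : bool := [exists e : 'I_k.+1, k == 2 ^ e].
Definition is_bpartition n (m : mult_fun n) : bool :=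
  is_partition m && [forall i : 'I_n, (nat_of_ord (m i) != 0) ==> is_pow2 i.+1].

Definition ppart (n : nat) : nat := #|[pred m : mult_fun n | is_partition m]|.
Definition qpart (n : nat) : nat := #|[pred m : mult_fun n | is_dpartition m]|.
Definition bpart (n : nat) : nat := #|[pred m : mult_fun n | is_bpartition m]|.

Definition Np (n : nat) : nat := \sum_(m : mult_fun n | is_partition m) num_parts m.
Definition Nq (n : nat) : nat := \sum_(m : mult_fun n | is_dpartition m) num_parts m.
Definition Nbin (n : nat) : nat := \sum_(m : mult_fun n | is_bpartition m) num_parts m.

Definition tau (m : nat) : nat := size (divisors m).
Definition sigma (m : nat) : nat := \sum_(d <- divisors m) d.
Definition tau_s (m : nat) : int := (\sum_(d <- divisors m) (-1) ^+ (m %/ d).-1)%R.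
Definition sigma_s (m : nat) : int :=
  (\sum_(d <- divisors m) (-1) ^+ (m %/ d).-1 * d%:Z)%R.

Definition v2 (m : nat) : nat := logn 2 m.

(* Each class of partitions is a product over the part sizes d: a partition is weighted by
   \prod_d w d (multiplicity of d), with w d j equal to 1, to [j <= 1], or to
   [j = 0 or d is a power of 2].  Each factor satisfies j w d j = \sum_i c d i w d (j - i),
   i.e. c d is the logarithmic derivative of the generating series of w d (c d i equal to 1,
   to (-1)^(i-1), or to [d is a power of 2]).  Writing n = \sum_d d m_d inside n N(n) and
   applying this identity to m_d removes i copies of the part d; what remains is a partition
   of n - d i, counted with its number of parts plus i.  Collecting the pairs (d, i) by
   t = d i yields the divisor sums \sum_(d | t) d c d (t/d) and \sum_(d | t) c d (t/d),
   which are sigma, sigma^s, 2^(v2 t + 1) - 1 and tau, tau^s, v2 t + 1 respectively. *)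

From mathcomp Require Import all_boot all_order all_algebra zify ring.
Import GRing.Theory Num.Theory.
Set Implicit Arguments. Unset Strict Implicit. Unset Printing Implicit Defensive.

Section ChangeOneMultiplicity.
Variables (n : nat) (m : mult_fun n) (a : 'I_n).

Definition set_mult (v : nat) : mult_fun n :=
  [ffun b => if b == a then inord v else m b].

Lemma set_multE v b : v <= n -> set_mult v b = (if b == a then v else m b) :> nat.
Proof. by move=> le_vn; rewrite ffunE; case: eqP => // _; rewrite inordK. Qed.

Lemma big_set_mult (R : Type) (idx : R) (op : Monoid.com_law idx)
    (F : 'I_n -> nat -> R) v : v <= n ->
  \big[op/idx]_b F b (set_mult v b) = op (F a v) (\big[op/idx]_(b | b != a) F b (m b)).
Proof.
move=> le_vn; rewrite (bigD1 a) //= set_multE // eqxx; congr (op _ _).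
by apply: eq_bigr => b /negbTE nba; rewrite set_multE // nba.
Qed.

Lemma part_sum_set_mult v : v <= n ->
  part_sum (set_mult v) + a.+1 * m a = part_sum m + a.+1 * v.
Proof.
move=> le_vn; rewrite /part_sum (@big_set_mult _ _ addn (fun b x => b.+1 * x)) //.
by rewrite [in RHS](bigD1 a) //=; ring.
Qed.

Lemma num_parts_set_mult v : v <= n -> num_parts (set_mult v) + m a = num_parts m + v.
Proof.
move=> le_vn; rewrite /num_parts (@big_set_mult _ _ addn (fun b x => x)) //.
by rewrite [in RHS](bigD1 a) //=; ring.
Qed.

Lemma part_sum_ge : a.+1 * m a <= part_sum m.
Proof. by rewrite /part_sum (bigD1 a) //= leq_addr. Qed.

End ChangeOneMultiplicity.

Lemma set_mult_id n (m : mult_fun n) a : set_mult m a (m a) = m.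
Proof. by apply/ffunP => b; rewrite ffunE; case: eqP => // ->; rewrite inord_val. Qed.

Lemma set_mult_set_mult n (m : mult_fun n) a u v : set_mult (set_mult m a u) a v = set_mult m a v.
Proof. by apply/ffunP => b; rewrite !ffunE; case: eqP. Qed.

Definition remove_parts n (m : mult_fun n) a i := set_mult m a (m a - i).
Definition add_parts n (m : mult_fun n) a i := set_mult m a (m a + i).

Section AddRemoveParts.
Variables (n : nat) (m : mult_fun n) (a : 'I_n) (i : nat).

Lemma mult_fun_le : m a <= n.
Proof. by rewrite -ltnS. Qed.

Lemma add_partsK : i <= m a -> add_parts (remove_parts m a i) a i = m.
Proof.
move=> le_i; rewrite /add_parts /remove_parts set_mult_set_mult set_multE ?eqxx.
  by rewrite subnK ?set_mult_id.
exact: leq_trans (leq_subr _ _) mult_fun_le.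
Qed.

Lemma remove_partsK : m a + i <= n -> remove_parts (add_parts m a i) a i = m.
Proof.
move=> le_n; rewrite /add_parts /remove_parts set_mult_set_mult set_multE ?eqxx //.
by rewrite addnK set_mult_id.
Qed.

Lemma part_sum_remove_parts : i <= m a ->
  part_sum (remove_parts m a i) + a.+1 * i = part_sum m.
Proof.
move=> le_i; have := part_sum_set_mult m a (leq_trans (leq_subr i _) mult_fun_le).
have : a.+1 * i <= a.+1 * m a by rewrite leq_mul2l le_i orbT.
rewrite /remove_parts mulnBr; lia.
Qed.

Lemma add_parts_le : part_sum m + a.+1 * i <= n -> m a + i <= n.
Proof.
move=> le_n; have := part_sum_ge m a; have : m a + i <= a.+1 * (m a + i) by rewrite leq_pmull.
rewrite mulnDr; lia.
Qed.

Hypothesis le_n : m a + i <= n.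

Lemma add_parts_at : add_parts m a i a = m a + i :> nat.
Proof. by rewrite set_multE ?eqxx. Qed.

Lemma part_sum_add_parts : part_sum (add_parts m a i) = part_sum m + a.+1 * i.
Proof. by have := part_sum_set_mult m a le_n; rewrite /add_parts mulnDr; lia. Qed.

Lemma num_parts_add_parts : num_parts (add_parts m a i) = num_parts m + i.
Proof. by have := num_parts_set_mult m a le_n; rewrite /add_parts; lia. Qed.

End AddRemoveParts.

Lemma big_remove_parts (R : Type) (idx : R) (op : Monoid.com_law idx) n (a : 'I_n) i
    (F : mult_fun n -> nat -> R) : a.+1 * i <= n ->
  \big[op/idx]_(m | (part_sum m == n) && (i <= m a)) F (remove_parts m a i) (num_parts m)
  = \big[op/idx]_(m | part_sum m == n - a.+1 * i) F m (num_parts m + i).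
Proof.
move=> le_n.
rewrite (reindex_onto (fun m => add_parts m a i) (fun m => remove_parts m a i)); last first.
  by move=> m /andP[_]; apply: add_partsK.
have add_le m : part_sum m = n - a.+1 * i -> m a + i <= n.
  by move=> ps_m; apply: add_parts_le; rewrite ps_m subnK.
rewrite (eq_bigl (fun m => part_sum m == n - a.+1 * i)) => [|m].
  by apply: eq_bigr => m /eqP/add_le le_m; rewrite remove_partsK // num_parts_add_parts.
apply/idP/eqP => [/andP[/andP[/eqP ps le_i] /eqP rem]|ps_m].
  by rewrite -rem; have := part_sum_remove_parts le_i; lia.
rewrite part_sum_add_parts ?add_le // ps_m subnK // eqxx add_parts_at ?add_le //.
by rewrite leq_addl remove_partsK ?add_le ?eqxx.
Qed.

(* Multiplicities extended by 0 to all part sizes, so that partitions living in different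
   types [mult_fun n] can be compared. *)
Definition mult n (m : mult_fun n) (x : nat) : nat :=
  if insub x is Some b then m b else 0.

Definition resize k n (m : mult_fun n) : mult_fun k := [ffun b : 'I_k => inord (mult m b)].

Section Multiplicities.
Variables (n : nat) (m : mult_fun n).

Lemma multE (b : 'I_n) : mult m b = m b.
Proof. by rewrite /mult valK. Qed.

Lemma mult_le x : mult m x <= n.
Proof. by rewrite /mult; case: insubP => [b _ _|_ //]; rewrite -ltnS. Qed.

Lemma mult_out x : n <= x -> mult m x = 0.
Proof. by move=> le_nx; rewrite /mult insubF // ltnNge le_nx. Qed.

Lemma mult_partition x : x.+1 * mult m x <= part_sum m.
Proof. by rewrite /mult; case: insubP => [b _ <-|_]; rewrite ?part_sum_ge ?muln0. Qed.

Lemma big_mult (R : Type) (idx : R) (op : Monoid.law idx) (F : nat -> nat -> R) N :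
    n <= N -> (forall x, F x 0 = idx) ->
  \big[op/idx]_(b < n) F b (m b) = \big[op/idx]_(0 <= x < N) F x (mult m x).
Proof.
move=> le_nN F0; rewrite (big_cat_nat _ (n := n)) //= [X in op _ X]big1_seq.
  by rewrite Monoid.mulm1 big_mkord; apply: eq_bigr => b _; rewrite multE.
by move=> x /andP[_]; rewrite mem_index_iota => /andP[le_nx _]; rewrite mult_out.
Qed.

Lemma mult_resize k : (forall x, mult m x <= k) -> (forall x, k <= x -> mult m x = 0) ->
  mult (resize k m) =1 mult m.
Proof.
move=> le_k out_k x; rewrite {1}/mult; case: insubP => [b _ <-|].
  by rewrite ffunE inordK // ltnS.
by rewrite -leqNgt => /out_k ->.
Qed.

End Multiplicities.

Lemma mult_inj n (m1 m2 : mult_fun n) : mult m1 =1 mult m2 -> m1 = m2.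
Proof.
by move=> eq_m; apply/ffunP => b; apply: val_inj; rewrite /= -!multE eq_m.
Qed.

Section Resize.
Variables (k n : nat) (le_kn : k <= n).

Lemma mult_widen (m : mult_fun k) : mult (resize n m) =1 mult m.
Proof.
apply: mult_resize => x; first exact: leq_trans (mult_le m x) le_kn.
by move=> le_nx; apply: mult_out; apply: leq_trans le_nx.
Qed.

Lemma mult_shrink (m : mult_fun n) : part_sum m = k -> mult (resize k m) =1 mult m.
Proof.
move=> ps_m; have le_mult x : x.+1 * mult m x <= k by rewrite -ps_m mult_partition.
apply: mult_resize => x; first exact: leq_trans (leq_pmull _ _) (le_mult x).
move=> le_kx; have := le_mult x; case: (mult m x) => // j; rewrite mulnS; lia.
Qed.

Lemma resize_widenK (m : mult_fun k) : resize k (resize n m) = m.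
Proof.
apply: mult_inj => x; rewrite mult_resize ?mult_widen //.
  by move=> y; rewrite mult_widen mult_le.
by move=> y le_ky; rewrite mult_widen mult_out.
Qed.

Lemma big_widen (R : Type) (idx : R) (op : Monoid.law idx) (F : nat -> nat -> R)
    (m : mult_fun k) : (forall x, F x 0 = idx) ->
  \big[op/idx]_(b < n) F b (resize n m b) = \big[op/idx]_(b < k) F b (m b).
Proof.
move=> F0; rewrite [LHS](big_mult _ _ (leqnn n)) // [RHS](big_mult _ _ le_kn) //.
by apply: eq_big_nat => x _; rewrite mult_widen.
Qed.

Lemma big_partitions_widen (R : Type) (idx : R) (op : Monoid.com_law idx)
    (G : forall n, mult_fun n -> R) :
    (forall m : mult_fun k, G n (resize n m) = G k m) ->
  \big[op/idx]_(M : mult_fun n | part_sum M == k) G n M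
  = \big[op/idx]_(m : mult_fun k | part_sum m == k) G k m.
Proof.
move=> G_widen; rewrite (reindex_onto (@resize n k) (@resize k n)); last first.
  move=> M /eqP ps_M; apply: mult_inj => x.
  by rewrite mult_widen mult_shrink.
have ps_widen (m : mult_fun k) : part_sum (resize n m) = part_sum m.
  by rewrite /part_sum (@big_widen _ _ addn (fun x j => x.+1 * j)) // => x; rewrite muln0.
apply: eq_big => [m|m _]; last exact: G_widen.
by rewrite ps_widen resize_widenK eqxx andbT.
Qed.

End Resize.

Lemma is_pow2P d : reflect (exists e, d = 2 ^ e) (is_pow2 d).
Proof.
apply: (iffP existsP) => [[e /eqP ->]|[e ->]]; first by exists e.
have lt_e : e < (2 ^ e).+1 by rewrite ltnS ltnW // ltn_expl.
by exists (Ordinal lt_e).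
Qed.

Lemma pow2_divisors t : 0 < t ->
  perm_eq [seq d <- divisors t | is_pow2 d] [seq 2 ^ e | e <- iota 0 (v2 t).+1].
Proof.
move=> t_gt0; apply: uniq_perm.
- exact/filter_uniq/divisors_uniq.
- by rewrite map_inj_uniq ?iota_uniq //; apply: expnI.
move=> d; rewrite mem_filter -dvdn_divisors //; apply/andP/mapP.
  move=> [/is_pow2P[e ->]]; rewrite pfactor_dvdn // => le_e.
  by exists e; rewrite // mem_iota add0n ltnS.
move=> [e]; rewrite mem_iota add0n ltnS => le_e ->.
by split; [apply/is_pow2P; exists e | rewrite pfactor_dvdn].
Qed.

Local Open Scope ring_scope.

Section DivisorSums.
Variable R : nmodType.

Lemma sum_divisors_nat (H : nat -> R) n t : (0 < t <= n)%N ->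
  \sum_(d <- divisors t) H d = \sum_(1 <= d < n.+1 | (d %| t)%N) H d.
Proof.
move=> /andP[t_gt0 le_tn]; rewrite -[RHS]big_filter; apply/perm_big/uniq_perm.
- exact: divisors_uniq.
- exact/filter_uniq/iota_uniq.
move=> d; rewrite mem_filter mem_index_iota -dvdn_divisors //.
case d_t: (d %| t)%N => //=; have := dvdn_leq t_gt0 d_t.
by have := dvdn_gt0 t_gt0 d_t; lia.
Qed.

Lemma sum_multiples (H : nat -> R) n d : (0 < d)%N ->
  \sum_(1 <= i < n.+1 | (d * i <= n)%N) H (d * i)%N
  = \sum_(1 <= t < n.+1 | (d %| t)%N) H t.
Proof.
move=> d_gt0; rewrite -big_filter -[RHS]big_filter -(big_map (muln d) xpredT).
apply/perm_big/uniq_perm.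
- rewrite map_inj_uniq; first exact/filter_uniq/iota_uniq.
  by move=> x y /eqP; rewrite eqn_pmul2l // => /eqP.
- exact/filter_uniq/iota_uniq.
move=> t; rewrite mem_filter mem_index_iota; apply/mapP/idP => [[i]|].
  rewrite mem_filter mem_index_iota => /andP[le_n /andP[i_gt0 _]] ->.
  by rewrite dvdn_mulr //= muln_gt0 d_gt0 i_gt0 ltnS.
move=> /andP[/dvdnP[i ->] /andP[t_gt0 le_tn]]; exists i; last by rewrite mulnC.
have le_i : (i <= i * d)%N by rewrite leq_pmulr.
by rewrite mem_filter mem_index_iota mulnC; move: t_gt0; rewrite muln_gt0; lia.
Qed.

Lemma sum_pairs_divisors (F : nat -> nat -> R) n :
  \sum_(a < n) \sum_(1 <= i < n.+1 | (a.+1 * i <= n)%N) F a.+1 i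
  = \sum_(1 <= t < n.+1) \sum_(d <- divisors t) F d (t %/ d)%N.
Proof.
transitivity (\sum_(1 <= d < n.+1) \sum_(1 <= i < n.+1 | (d * i <= n)%N) F d i).
  by rewrite big_add1 /= big_mkord.
transitivity (\sum_(1 <= t < n.+1) \sum_(1 <= d < n.+1 | (d %| t)%N) F d (t %/ d)%N).
  rewrite [RHS](exchange_big_dep_nat xpredT) //=; apply: eq_big_nat => d /andP[d_gt0 _].
  rewrite -sum_multiples //; apply: eq_bigr => i _; by rewrite mulKn.
by apply: eq_big_nat => t t_bounds; rewrite (sum_divisors_nat _ t_bounds).
Qed.

End DivisorSums.

Lemma sum_convolution_rev (R : comPzSemiRingType) (A N : nat -> R) n : N 0%N = 0 ->
  \sum_(1 <= t < n.+1) A t * N (n - t)%N = \sum_(1 <= k < n) N k * A (n - k)%N.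
Proof.
move=> N0; case: n => [|n]; first by rewrite !big_geq.
rewrite big_nat_recr //= subnn N0 mulr0 addr0 big_nat_rev /=.
by apply: eq_big_nat => t /andP[t_gt0 le_tn]; rewrite mulrC; congr (N _ * A _); lia.
Qed.


Section WeightedPartitions.
Variables (R : comPzSemiRingType) (w : nat -> nat -> R).

Definition mweight n (m : mult_fun n) : R := \prod_(b < n) w b.+1 (m b).
Definition wcount n k : R := \sum_(m : mult_fun n | part_sum m == k) mweight m.
Definition wparts n k : R :=
  \sum_(m : mult_fun n | part_sum m == k) mweight m * (num_parts m)%:R.

Lemma wparts0 : wparts 0 0 = 0.
Proof. by apply: big1 => m _; rewrite /num_parts big_ord0 mulr0. Qed.

Hypothesis w_0 : forall d, w d 0 = 1.

Lemma mweight_widen k n (m : mult_fun k) : (k <= n)%N -> mweight (resize n m) = mweight m.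
Proof. by move=> le_kn; rewrite /mweight (big_widen le_kn _ (F := fun x j => w x.+1 j)). Qed.

Lemma num_parts_widen k n (m : mult_fun k) : (k <= n)%N ->
  num_parts (resize n m) = num_parts m.
Proof. by move=> le_kn; rewrite /num_parts (big_widen le_kn _ (F := fun _ j => j)). Qed.

Lemma wcount_widen k n : (k <= n)%N -> wcount n k = wcount k k.
Proof.
move=> le_kn; apply: (big_partitions_widen le_kn _ (G := @mweight)) => m.
exact: mweight_widen.
Qed.

Lemma wparts_widen k n : (k <= n)%N -> wparts n k = wparts k k.
Proof.
move=> le_kn.
apply: (big_partitions_widen le_kn _ (G := fun n m => mweight m * (num_parts m)%:R)) => m.
by rewrite mweight_widen ?num_parts_widen.
Qed.

Variable c : nat -> nat -> R.
Hypothesis w_log_deriv :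
  forall d j, j%:R * w d j = \sum_(1 <= i < j.+1) c d i * w d (j - i).

Lemma mult_mweight n (m : mult_fun n) a :
  (m a)%:R * mweight m
  = \sum_(1 <= i < n.+1 | (i <= m a)%N) c a.+1 i * mweight (remove_parts m a i).
Proof.
rewrite /mweight (bigD1 a) //= mulrA w_log_deriv big_distrl /=.
rewrite (@big_nat_widen _ _ _ 1 (m a).+1 n.+1) ?ltnS ?mult_fun_le //; apply: eq_bigr => i _.
have le_n : (m a - i <= n)%N by rewrite (leq_trans (leq_subr _ _) (mult_fun_le m a)).
by rewrite /remove_parts (@big_set_mult _ _ _ _ _ *%R (fun b j => w b.+1 j)) ?mulrA.
Qed.

Lemma sum_mult_wparts n (a : 'I_n) :
  \sum_(m | part_sum m == n) (m a)%:R * mweight m * (num_parts m)%:R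
  = \sum_(1 <= i < n.+1 | (a.+1 * i <= n)%N)
      c a.+1 i * (wparts (n - a.+1 * i)%N (n - a.+1 * i)%N
                  + i%:R * wcount (n - a.+1 * i)%N (n - a.+1 * i)%N).
Proof.
under eq_bigr do rewrite mult_mweight big_distrl /=.
rewrite (exchange_big_dep (fun i => a.+1 * i <= n)%N) /=; last first.
  move=> m i /eqP ps_m le_i; have := part_sum_ge m a; rewrite ps_m; apply: leq_trans.
  by rewrite leq_mul2l le_i orbT.
apply: eq_bigr => i le_n.
rewrite (@big_remove_parts _ _ _ n a i (fun m k => c a.+1 i * mweight m * k%:R)) //.
have le_n_sub := leq_subr (a.+1 * i) n.
rewrite -(wparts_widen le_n_sub) -(wcount_widen le_n_sub) /wparts /wcount.
rewrite mulrDr !big_distrr -big_split /=.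
by apply: eq_bigr => m _; rewrite natrD; ring.
Qed.

Lemma mul_wparts n :
  n%:R * wparts n n
  = \sum_(a < n) a.+1%:R * \sum_(m | part_sum m == n) (m a)%:R * mweight m * (num_parts m)%:R.
Proof.
rewrite /wparts big_distrr /=; under [RHS]eq_bigr do rewrite big_distrr /=.
rewrite [RHS]exchange_big /=; apply: eq_bigr => m /eqP ps_m.
rewrite -{1}ps_m /part_sum natr_sum big_distrl /=; apply: eq_bigr => a _.
by rewrite natrM; ring.
Qed.

Definition sigma_c t := \sum_(d <- divisors t) d%:R * c d (t %/ d)%N.
Definition tau_c t := \sum_(d <- divisors t) c d (t %/ d)%N.

Theorem wparts_recurrence n :
  n%:R * wparts n n
  = \sum_(1 <= k < n) wparts k k * sigma_c (n - k)%N
    + \sum_(1 <= t < n.+1) t%:R * tau_c t * wcount (n - t)%N (n - t)%N.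
Proof.
rewrite -(@sum_convolution_rev _ _ (fun k => wparts k k)) ?wparts0 // -big_split /=.
rewrite mul_wparts; under [LHS]eq_bigr do rewrite sum_mult_wparts big_distrr /=.
rewrite (sum_pairs_divisors (fun d i => d%:R * (c d i * (wparts (n - d * i)%N (n - d * i)%N
   + i%:R * wcount (n - d * i)%N (n - d * i)%N)))).
apply: eq_big_nat => t /andP[t_gt0 _].
rewrite /sigma_c /tau_c big_distrl -mulrA big_distrl big_distrr -big_split /=.
apply: eq_big_seq => d; rewrite -dvdn_divisors // => d_t.
have t_eq : (d * (t %/ d))%N = t by rewrite mulnC divnK.
by rewrite t_eq -[in t%:R]t_eq natrM; ring.
Qed.

End WeightedPartitions.

Section PartitionClasses.
Variables (R : comPzSemiRingType) (w : nat -> nat -> R) (n : nat) (P : pred (mult_fun n)).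
Hypotheses (mweight_P : forall m, is_partition m -> mweight w m = (P m)%:R)
           (P_partition : forall m, P m -> is_partition m).

Lemma wparts_class : wparts w n n = (\sum_(m | P m) num_parts m)%:R.
Proof.
rewrite /wparts natr_sum big_mkcond [RHS]big_mkcond /=; apply: eq_bigr => m _.
case: ifP => [pm|npm]; first by rewrite mweight_P //; case: (P m); rewrite ?mul1r ?mul0r.
by case: ifP => // /P_partition; rewrite /is_partition npm.
Qed.

Lemma wcount_class : wcount w n n = #|P|%:R.
Proof.
rewrite /wcount -sum1_card natr_sum big_mkcond [RHS]big_mkcond /=; apply: eq_bigr => m _.
rewrite unfold_in; case: ifP => [pm|npm]; first by rewrite mweight_P //; case: (P m).
by case: ifP => // /P_partition; rewrite /is_partition npm.
Qed.

End PartitionClasses.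

Lemma mweight_indicator (R : comPzSemiRingType) (w : nat -> nat -> R) n (m : mult_fun n)
    (P : pred 'I_n) :
  (forall b : 'I_n, w b.+1 (m b) = (P b)%:R) -> mweight w m = [forall b, P b]%:R.
Proof.
move=> w_P; case: (boolP [forall b, P b]) => [/forallP P_all|/forallPn[b nPb]].
  by apply: big1 => b _; rewrite w_P P_all.
by rewrite /mweight (bigD1 b) //= w_P (negbTE nPb) mul0r.
Qed.

Definition w_all (d j : nat) : int := 1.
Definition c_all (d i : nat) : int := 1.

Lemma w_all_log_deriv d j :
  j%:R * w_all d j = \sum_(1 <= i < j.+1) c_all d i * w_all d (j - i).
Proof.
rewrite /w_all /c_all mulr1 (eq_bigr (fun=> 1)) => [|i _]; last exact: mulr1.
by rewrite sumr_const_nat subn1.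
Qed.

Lemma wparts_all n : wparts w_all n n = (Np n)%:R.
Proof. by apply: (@wparts_class _ _ _ (@is_partition n)) => // m ->; apply: big1. Qed.

Lemma wcount_all n : wcount w_all n n = (ppart n)%:R.
Proof. by apply: wcount_class => // m /= ->; apply: big1. Qed.

Lemma sigma_c_all t : sigma_c c_all t = (sigma t)%:R.
Proof. by rewrite /sigma_c /sigma natr_sum; apply: eq_bigr => d _; rewrite mulr1. Qed.

Lemma tau_c_all t : tau_c c_all t = (tau t)%:R.
Proof. by rewrite /tau_c /tau -sum1_size natr_sum. Qed.

Definition w_distinct (d j : nat) : int := (j <= 1)%:R.
Definition c_distinct (d i : nat) : int := (-1) ^+ i.-1.

Lemma w_distinct_log_deriv d j :
  j%:R * w_distinct d j = \sum_(1 <= i < j.+1) c_distinct d i * w_distinct d (j - i).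
Proof.
case: j => [|[|j]]; [by rewrite big_geq | by rewrite big_nat1 |].
rewrite big_nat_recr // big_nat_recr //= big1_seq => [|i]; last first.
  by rewrite mem_index_iota /w_distinct => /andP[_ /andP[_ lt_ij]]; rewrite leqNgt ltn_subRL; lia.
by rewrite /w_distinct /c_distinct subSS subnn subSn // subnn exprS /=; ring.
Qed.

Lemma wparts_distinct n : wparts w_distinct n n = (Nq n)%:R.
Proof.
apply: (@wparts_class _ _ _ (@is_dpartition n)) => [m pm|m /andP[] //].
by rewrite /is_dpartition pm; apply: mweight_indicator.
Qed.

Lemma wcount_distinct n : wcount w_distinct n n = (qpart n)%:R.
Proof.
apply: wcount_class => [m /= pm|m /andP[] //].
by rewrite /is_dpartition pm; apply: mweight_indicator.
Qed.

Lemma sigma_c_distinct t : sigma_c c_distinct t = sigma_s t.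
Proof. by apply: eq_bigr => d _; rewrite mulrC natz. Qed.

Definition w_binary (d j : nat) : int := ((j == 0) || is_pow2 d)%:R.
Definition c_binary (d i : nat) : int := (is_pow2 d)%:R.

Lemma w_binary_log_deriv d j :
  j%:R * w_binary d j = \sum_(1 <= i < j.+1) c_binary d i * w_binary d (j - i).
Proof.
rewrite /w_binary /c_binary; case: (is_pow2 d); rewrite ?orbT /=.
  by rewrite mulr1 (eq_bigr (fun=> 1)) ?sumr_const_nat ?subn1 // => i _; rewrite orbT mulr1.
by rewrite big1 => [|i _]; [case: j => [|j] /=; rewrite ?mul0r ?mulr0 | rewrite mul0r].
Qed.

Lemma mweight_binary n (m : mult_fun n) :
  mweight w_binary m = [forall b : 'I_n, (nat_of_ord (m b) != 0) ==> is_pow2 b.+1]%:R.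
Proof. by apply: mweight_indicator => b; rewrite implybE negbK. Qed.

Lemma wparts_binary n : wparts w_binary n n = (Nbin n)%:R.
Proof.
apply: (@wparts_class _ _ _ (@is_bpartition n)) => [m pm|m /andP[] //].
by rewrite /is_bpartition pm mweight_binary.
Qed.

Lemma wcount_binary n : wcount w_binary n n = (bpart n)%:R.
Proof.
apply: wcount_class => [m /= pm|m /andP[] //].
by rewrite /is_bpartition pm mweight_binary.
Qed.

Lemma sigma_c_binary t : (0 < t)%N -> sigma_c c_binary t = (2 ^ (v2 t).+1 - 1)%N%:R.
Proof.
move=> t_gt0; transitivity ((\sum_(d <- divisors t | is_pow2 d) d)%N%:R : int).
  rewrite natr_sum big_mkcond; apply: eq_bigr => d _.
  by rewrite /c_binary; case: (is_pow2 d); rewrite ?mulr1 ?mulr0.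
rewrite -big_filter (perm_big _ (pow2_divisors t_gt0)) big_map.
by rewrite subn1 predn_exp mul1n -val_enum_ord big_map enumT.
Qed.

Lemma tau_c_binary t : (0 < t)%N -> tau_c c_binary t = (v2 t).+1%:R.
Proof.
move=> t_gt0; transitivity ((\sum_(d <- divisors t | is_pow2 d) 1)%N%:R : int).
  by rewrite natr_sum big_mkcond; apply: eq_bigr => d _; rewrite /c_binary; case: is_pow2.
by rewrite -big_filter sum1_size (perm_size (pow2_divisors t_gt0)) size_map size_iota.
Qed.

Local Close Scope ring_scope.

Theorem corollary9 (n : nat) : 0 < n ->
  [/\ n * Np n = \sum_(1 <= k < n) Np k * sigma (n - k)
                 + \sum_(1 <= t < n.+1) t * tau t * ppart (n - t),
      ((n%:Z * (Nq n)%:Z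
        = \sum_(1 <= k < n) (Nq k)%:Z * sigma_s (n - k)
          + \sum_(1 <= t < n.+1) t%:Z * tau_s t * (qpart (n - t))%:Z)%R)
    & n * Nbin n = \sum_(1 <= k < n) Nbin k * (2 ^ (v2 (n - k)).+1 - 1)
                   + \sum_(1 <= t < n.+1) t * (v2 t).+1 * bpart (n - t)].
Proof.
move=> _; split.
- apply/eqP; rewrite -(eqr_nat int) natrD !natr_sum natrM -wparts_all.
  rewrite (wparts_recurrence (fun=> erefl) w_all_log_deriv); apply/eqP; congr (_ + _)%R.
    by apply: eq_big_nat => k _; rewrite natrM wparts_all sigma_c_all.
  by apply: eq_big_nat => t _; rewrite !natrM wcount_all tau_c_all.
- rewrite -!natz -wparts_distinct (wparts_recurrence (fun=> erefl) w_distinct_log_deriv).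
  congr (_ + _)%R.
    by apply: eq_big_nat => k _; rewrite wparts_distinct sigma_c_distinct natz.
  by apply: eq_big_nat => t _; rewrite wcount_distinct !natz.
- apply/eqP; rewrite -(eqr_nat int) natrD !natr_sum natrM -wparts_binary.
  rewrite (wparts_recurrence (fun=> erefl) w_binary_log_deriv); apply/eqP; congr (_ + _)%R.
    apply: eq_big_nat => k /andP[_ lt_kn].
    by rewrite natrM wparts_binary sigma_c_binary ?subn_gt0.
  by apply: eq_big_nat => t /andP[t_gt0 _]; rewrite !natrM wcount_binary tau_c_binary.
Qed.
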